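(* Let $s,t,m$ be positive integers with $s\le t$, $s\mid m$, $m\ge t+2$, let $n=m^2$, and let $z=s(\lceil (t+2)/s\rceil-1)$. Let $v(0),\dots,v(m-1)$ be integers with $0\le v(j)\le t-1-(j\bmod s)$ for all $j$ and $v(j)=0$ for $m-z\le j\le m-1$. Starting from any configuration of distinct cell values $c_0,\dots,c_{n-1}$, after the Block Algorithm (described in the context) finishes, for every $j$ with $0\le j\le m-z-1$, \[ \bigl|\{k:\ j<k\le s\lfloor j/s\rfloor+t-1,\ c_k<c_j\}\bigr| = v(j), \] i.e., the block of cells $c_0,\dots,c_{m-1}$ represents the target digits $v(0),\dots,v(m-z-1)$ in the $(s,t,n)$-local rank-modulation factoradic representation.
   Context: Cells $c_0,\dots,c_{n-1}$ are real numbers (indices modulo $n$). For $0\le j\le n-1$ let $l(j)=s\lceil (j-t+1)/s\rceil \bmod n$ and $r(j)=(s\lfloor j/s\rfloor+t-1)\bmod n$. Pushing cell $j$ (''push-to-the-top'') replaces $c_j$ by $\max\{c_{l(j)},c_{l(j)+1},\dots,c_{r(j)}\}+1$ (indices cyclic), leaving other cells unchanged. For $0\le j\le m-3$ define $l'(j)=l(j)$ if $0\le l(j)\le m-3$ and $l'(j)=0$ otherwise, and $r'(j)=r(j)$ if $0\le r(j)\le m-3$ and $r'(j)=m-3$ otherwise. Block Algorithm: (1) push cell $n-1$; (2) set $a_k\leftarrow 0$ for $k=0,\dots,m-3$ and $j\leftarrow 0$; (3) repeat: if $v(j)=\sum_{i=j+1}^{r'(j)}a_i$ and $a_j=0$,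 then push cell $j$, set $a_j\leftarrow 1$ and $j\leftarrow l'(j)$; otherwise set $j\leftarrow j+1$; until $j=m-2$; (4) push cell $m-2$. *)

From HB Require Import structures.
From mathcomp Require Import all_boot all_order all_algebra.
From mathcomp Require Import reals.
Set Implicit Arguments. Unset Strict Implicit. Unset Printing Implicit Defensive.
Import Order.TTheory GRing.Theory Num.Theory.

Section LocalRM.
Variable R : realType.
Variables (s t n : nat).

(* l(j) = s * ceil((j - t + 1)/s) mod n, computed in int (floor division
   intdiv, ceil x = - floor(-x)), then reduced to a nat in [0, n). *)
Definition lidx (j : nat) : nat :=
  `|((s%:Z * (- ((- (j%:Z - t%:Z + 1)) %/ s%:Z)%Z)) %% n%:Z)%Z|%N.

Definition ridx (j : nat) : nat := (s * (j %/ s) + t - 1) %% n.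

Definition cyc_window (l r : nat) : seq nat :=
  [seq (l + k) %% n | k <- iota 0 ((r + n - l) %% n).+1].

Definition push (j : nat) (c : nat -> R) : nat -> R :=
  let mx := foldr Num.max (c (lidx j)) (map c (cyc_window (lidx j) (ridx j))) in
  fun k => if k == j then (mx + 1)%R else c k.

End LocalRM.

Section Block.
Variable R : realType.
Variables (s t n m : nat) (v : nat -> nat).

Definition lidx' (j : nat) : nat :=
  if lidx s t n j <= m - 3 then lidx s t n j else 0.
Definition ridx' (j : nat) : nat :=
  if ridx s t n j <= m - 3 then ridx s t n j else m - 3.

Record bstate := BState { bcells : nat -> R; bbits : nat -> nat; bj : nat }.

Definition body (st : bstate) : bstate :=
  let j := bj st in let a := bbits st in
  if (v j == \sum_(j.+1 <= i < (ridx' j).+1) a i) && (a j == 0%N) then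
    BState (push s t n j (bcells st)) (fun k => if k == j then 1%N else a k)
           (lidx' j)
  else BState (bcells st) a j.+1.

(* "repeat body until j = m-2": LoopRun st f means the loop started in st
   terminates with final cells f *)
Inductive LoopRun : bstate -> (nat -> R) -> Prop :=
| LR_stop st : bj (body st) = (m - 2)%N -> LoopRun st (bcells (body st))
| LR_cont st f : bj (body st) <> (m - 2)%N -> LoopRun (body st) f ->
                 LoopRun st f.

Definition BlockRun (c c' : nat -> R) : Prop :=
  exists f, LoopRun (BState (push s t n (n - 1) c) (fun _ => 0%N) 0) f /\
            c' = push s t n (m - 2) f.

End Block.

Definition local_rank (R : realType) (s t : nat) (c : nat -> R) (j : nat) : nat :=
  count (fun k => (c k < c j)%R) (iota j.+1 (s * (j %/ s) + t - 1 - j)).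

From HB Require Import structures.
From mathcomp Require Import all_boot all_order all_algebra.
From mathcomp Require Import reals zify ring lra.
Set Implicit Arguments. Unset Strict Implicit. Unset Printing Implicit Defensive.
Import Order.TTheory GRing.Theory Num.Theory.

(* Call cell [j] pushed once [a_j = 1].  Invariant of the loop: a pushed cell
   [j] lies above all unpushed cells of its window [(j, r'(j)]] and above
   exactly [v(j)] pushed ones; an unpushed cell sees at most [v(j)] pushed
   cells in its window, and fewer once the pointer has passed it.  Pushing
   [j] lifts [c_j] above its push window, which contains both its own window
   and every cell [i < j] whose window contains [j]; these [i] lie in
   [[l'(j), j)], so the pointer, reset to [l'(j)], revisits them.  Each push
   sets a bit, so the loop terminates, and at pointer [m - 2] a downward
   induction using [v(j) <= |window of j|] shows that every cell [j <= m - 3]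
   is pushed. *)


Lemma block_tail_eq s t : 0 < s ->
  s * ((t + 2 + s - 1) %/ s - 1) = s * ((t + 1) %/ s).
Proof.
move=> s_gt0; rewrite (_ : t + 2 + s - 1 = t + 1 + s); last by lia.
by rewrite divnDr ?dvdnn // divnn s_gt0 addnK.
Qed.

Lemma leq_block_end s t p : 0 < s -> s <= t -> p <= s * (p %/ s) + t - 1.
Proof.
move=> s_gt0 le_st; have := divn_eq p s; have := ltn_mod p s.
by rewrite s_gt0 mulnC; lia.
Qed.

Lemma block_end_lt s t p q i : 0 < s -> s <= t ->
  p < s * q + t -> s * q + t <= p + s -> i < s * q -> s * (i %/ s) + t - 1 < p.
Proof.
move=> s_gt0 le_st lt_p le_p lt_i.
have : s * (i %/ s).+1 <= s * q by rewrite leq_pmul2l // ltn_divLR // mulnC.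
by rewrite mulnS; lia.
Qed.

Lemma lidx_block_or_wrap s t N p : 0 < s -> s <= t -> t <= N -> p + t < N ->
  (exists q, lidx s t N p = s * q /\ p < s * q + t /\ s * q + t <= p + s) \/
  (N + 1 - t <= lidx s t N p < N).
Proof.
move=> s_gt0 le_st le_tN lt_ptN; rewrite /lidx.
set X : int := (Posz p - Posz t + 1)%R.
set Q : int := (- ((- X) %/ Posz s)%Z)%R.
have s_gt0' : (0 < Posz s)%R by rewrite ltz_nat.
have s_neq0 : (Posz s != 0)%R by rewrite eqz_nat -lt0n.
have E := divz_eq (- X) (Posz s).
have r_ge0 := modz_ge0 (- X) s_neq0.
have r_lt := @ltz_pmod (- X) (Posz s) s_gt0'.
set r := ((- X) %% Posz s)%Z in E r_ge0 r_lt.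
have sQE : (Posz s * Q = X + r)%R by rewrite /Q -[X in RHS]opprK {2}E; ring.
case: (lerP 0%R (Posz s * Q)%R) => sQ_sign.
- left; have Q_ge0 : (0 <= Q)%R by rewrite -(pmulr_rge0 _ s_gt0').
  exists `|Q|%N.
  have QE : Q = `|Q|%N by rewrite gez0_abs.
  rewrite modz_small; last by apply/andP; split => //; rewrite sQE /X; lia.
  rewrite {1}QE -PoszM absz_nat.
  have : (Posz s * Q)%R = Posz (s * `|Q|%N) by rewrite {1}QE PoszM.
  rewrite sQE /X; lia.
- right; have -> : ((Posz s * Q) %% Posz N)%Z = (Posz s * Q + Posz N)%R.
    by rewrite -modzDr modz_small //; rewrite sQE /X in sQ_sign *; lia.
  rewrite sQE /X in sQ_sign *; lia.
Qed.

Lemma mem_cyc_window N l r x : l < N -> r < N -> x < N ->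
  (l <= x <= r) \/ (r < l /\ x <= r) -> x \in cyc_window N l r.
Proof.
move=> lN rN xN [/andP[lx xr]|[rl xr]]; apply/mapP.
- exists (x - l); last by rewrite subnKC // modn_small.
  rewrite mem_iota add0n ltnS (_ : r + N - l = r - l + N); last by lia.
  by rewrite modnDr modn_small; lia.
- exists (x + N - l); first by rewrite mem_iota add0n ltnS modn_small; lia.
  by rewrite (_ : l + (x + N - l) = x + N); [rewrite modnDr modn_small | lia].
Qed.

Lemma foldr_max_ge (R : realType) (c : nat -> R) a (w : seq nat) x :
  x \in w -> (c x <= foldr Num.max a (map c w))%R.
Proof.
elim: w => //= y w IH; rewrite in_cons => /orP[/eqP->|/IH h].
  by rewrite le_max lexx.
by rewrite le_max h orbT.
Qed.

Lemma push_ne (R : realType) s t N j (c : nat -> R) k :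
  k != j -> push s t N j c k = c k.
Proof. by rewrite /push => /negbTE->. Qed.

Lemma push_window_lt (R : realType) s t N j (c : nat -> R) x :
  x \in cyc_window N (lidx s t N j) (ridx s t N j) -> (c x < push s t N j c j)%R.
Proof.
move=> x_in; rewrite /push eqxx.
have := foldr_max_ge c (c (lidx s t N j)) x_in; lra.
Qed.

Lemma count_predU1_uniq (l : seq nat) (b : pred nat) p : uniq l -> ~~ b p ->
  count (fun k => (k == p) || b k) l = count b l + (p \in l).
Proof.
move=> ul bp; rewrite -count_uniq_mem // addnC -count_predUI.
rewrite (@eq_count _ (predI (pred1 p) b) pred0) ?count_pred0 ?addn0 //.
by move=> k /=; case: eqP => // ->; rewrite (negbTE bp).
Qed.

Lemma sum_bits_count (a : nat -> nat) (l : seq nat) : (forall k, a k <= 1) ->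
  \sum_(k <- l) a k = count (fun k => a k != 0) l.
Proof.
move=> a_le1; elim: l => [|y l IH]; rewrite ?big_nil ?big_cons //= IH.
by case: (a y) (a_le1 y) => [|[|]].
Qed.





Section Windows.
Variables (s t m : nat).
Hypotheses (s_gt0 : 0 < s) (le_st : s <= t) (le_t2m : t + 2 <= m).
Local Notation N := (m ^ 2).
Local Notation bend j := (s * (j %/ s) + t - 1).

Lemma ridx_small p : p <= m - 3 -> ridx s t N p = bend p.
Proof. by move=> le_pm; rewrite /ridx modn_small //; have := leq_divM p s; nia. Qed.

Lemma ridx'_le_bend p : p <= m - 3 -> ridx' s t N m p <= bend p.
Proof. by move=> le_pm; rewrite /ridx' ridx_small //; case: ifP => //; lia. Qed.

Lemma ridx'_le p : ridx' s t N m p <= m - 3.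
Proof. by rewrite /ridx'; case: ifP => //; lia. Qed.

Lemma lidx_cases p : p <= m - 3 ->
  (exists q, lidx s t N p = s * q /\ p < s * q + t /\ s * q + t <= p + s) \/
  (N + 1 - t <= lidx s t N p < N).
Proof. by move=> le_pm; apply: lidx_block_or_wrap => //; nia. Qed.

Lemma lidx'_le p : p <= m - 3 -> lidx' s t N m p <= p.
Proof.
move=> le_pm; rewrite /lidx'; case: ifP => // le_lm.
by case: (lidx_cases le_pm) => [[q [-> ?]]|]; lia.
Qed.

Lemma bend_lt_lidx' p i : p <= m - 3 -> i < lidx' s t N m p -> bend i < p.
Proof.
move=> le_pm; rewrite /lidx'; case: ifP => // le_lm.
case: (lidx_cases le_pm) => [[q [lE [? ?]]]|]; last lia.
by rewrite lE; apply: block_end_lt.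
Qed.

Lemma mem_push_window p x : p <= m - 3 -> x <= m - 3 ->
  (p <= x <= bend p) \/ (x < p <= bend x) ->
  x \in cyc_window N (lidx s t N p) (ridx s t N p).
Proof.
move=> le_pm le_xm x_near.
have lt_m3N : m - 3 + m < N by nia.
have := leq_block_end p s_gt0 le_st; have := leq_divM p s.
case: (lidx_cases le_pm) => [[q [lE [lt_p le_p]]]|/andP[? ?]] ? ?;
  apply: mem_cyc_window; rewrite ?lE ?ridx_small //; try lia.
left; case: x_near => ?; first lia.
case: (ltnP x (s * q)) => lt_x; last lia.
have := block_end_lt s_gt0 le_st lt_p le_p lt_x; lia.
Qed.

Hypothesis s_dvd_m : s %| m.
Local Notation z := (s * ((t + 2 + s - 1) %/ s - 1)).

(* Needs [s %| m]: blocks of [s] cells then tile [[0, m)]. *)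
Lemma tail_le_of_bend_gt i : m - 3 < bend i -> m - z <= i.
Proof.
move=> lt_bend; rewrite block_tail_eq //.
have [M mE] := dvdnP s_dvd_m.
have := leq_divM i s; have := divn_eq (t + 1) s; have := ltn_mod (t + 1) s.
rewrite s_gt0 mulnC; set a := i %/ s in lt_bend *; set b := (t + 1) %/ s.
move=> lt_r tE le_sa.
have : s * M < s * (a + b + 1) by rewrite !mulnDr muln1; lia.
rewrite ltn_pmul2l // => lt_M.
have : s * M <= s * (a + b) by rewrite leq_pmul2l //; lia.
by rewrite mulnDr; lia.
Qed.

End Windows.

Definition set_bit (a : nat -> nat) (p : nat) : nat -> nat :=
  fun k => if k == p then 1 else a k.

Section Loop.
Variables (R : realType) (s t m : nat) (v : nat -> nat).
Local Notation N := (m ^ 2).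
Local Notation r' := (ridx' s t (m ^ 2) m).
Local Notation step := (body s t (m ^ 2) m v).

Definition window (i : nat) : seq nat := iota i.+1 (r' i - i).

Definition pushed_in_window (a : nat -> nat) (i : nat) : nat :=
  count (fun k => a k != 0) (window i).

Record loop_inv (x : bstate R) : Prop := LoopInv {
  bits_le1 : forall k, bbits x k <= 1;
  unpushed_le : forall i, i <= m - 3 -> bbits x i = 0 ->
    pushed_in_window (bbits x) i <= v i;
  passed_resolved : forall i, i < bj x ->
    bbits x i != 0 \/ pushed_in_window (bbits x) i < v i;
  pushed_above_unpushed : forall i, i <= m - 3 -> bbits x i != 0 ->
    forall k, i < k <= r' i -> bbits x k = 0 -> (bcells x k < bcells x i)%R;
  pushed_rank : forall i, i <= m - 3 -> bbits x i != 0 ->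
    count (fun k => (bbits x k != 0) && (bcells x k < bcells x i)%R) (window i)
    = v i }.

Lemma loop_inv_init c : loop_inv (BState c (fun _ => 0) 0).
Proof.
split=> //= i _ _; rewrite /pushed_in_window.
by rewrite (@eq_count _ _ pred0) ?count_pred0.
Qed.

Lemma sum_window_bits a i : (forall k, a k <= 1) ->
  \sum_(i.+1 <= k < (r' i).+1) a k = pushed_in_window a i.
Proof. by move=> a_le1; rewrite /index_iota subSS sum_bits_count. Qed.

Lemma pushed_in_window_set_bit a p i : a p = 0 ->
  pushed_in_window (set_bit a p) i = pushed_in_window a i + (i < p <= r' i).
Proof.
move=> ap0; rewrite /pushed_in_window.
rewrite (@eq_count _ _ (fun k => (k == p) || (a k != 0))); last first.
  by move=> k; rewrite /set_bit; case: (k == p).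
rewrite count_predU1_uniq ?iota_uniq ?ap0 // mem_iota.
by congr (_ + nat_of_bool _); apply/idP/idP => /andP[? ?]; apply/andP; split; lia.
Qed.

Lemma skip_inv c a p : p <= m - 3 -> loop_inv (BState c a p) ->
  ~~ ((v p == pushed_in_window a p) && (a p == 0)) ->
  loop_inv (BState c a p.+1).
Proof.
move=> le_pm [/= le1 unp passed above rank] not_push; split=> //= i.
rewrite ltnS leq_eqVlt => /orP[/eqP->|/passed //].
case: (eqVneq (a p) 0) => [ap0|]; last by left.
right; move: not_push; rewrite ap0 eqxx andbT ltn_neqAle eq_sym => ->.
exact: unp.
Qed.

Hypotheses (s_gt0 : 0 < s) (le_st : s <= t) (le_t2m : t + 2 <= m).

Lemma window_lt_push (c : nat -> R) p k : p <= m - 3 -> p < k <= r' p ->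
  (c k < push s t N p c p)%R.
Proof.
move=> le_pm k_in; apply: push_window_lt; apply: mem_push_window => //.
  by have := ridx'_le s t m p; lia.
by have := ridx'_le_bend s_gt0 le_st le_t2m le_pm; left; lia.
Qed.

Lemma window_owner_lt_push (c : nat -> R) p i : i <= m - 3 -> i < p <= r' i ->
  (c i < push s t N p c p)%R.
Proof.
move=> le_im p_in; apply: push_window_lt; apply: mem_push_window => //.
  by have := ridx'_le s t m i; lia.
by have := ridx'_le_bend s_gt0 le_st le_t2m le_im; right; lia.
Qed.

Lemma push_inv c a p : p <= m - 3 -> loop_inv (BState c a p) ->
  v p = pushed_in_window a p -> a p = 0 ->
  loop_inv (BState (push s t N p c) (set_bit a p) (lidx' s t N m p)).
Proof.
move=> le_pm [/= le1 unp passed above rank] vp ap0.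
have le_lp := lidx'_le s_gt0 le_st le_t2m le_pm.
have pushE k : k != p -> push s t N p c k = c k by exact: push_ne.
split=> /=.
- by move=> k; rewrite /set_bit; case: eqP.
- move=> i le_im; rewrite /set_bit; case: eqP => // /eqP ip ai0.
  rewrite pushed_in_window_set_bit //; have := unp i le_im ai0.
  case: (ltnP i p) => [/passed[/eqP//|]|] /=; case: (p <= r' i); lia.
- move=> i lt_il; have lt_ip : i < p by lia.
  have le_im : i <= m - 3 by lia.
  have p_out : (p <= r' i) = false.
    apply/negbTE; rewrite -ltnNge.
    have := bend_lt_lidx' s_gt0 le_st le_t2m le_pm lt_il.
    by have := ridx'_le_bend s_gt0 le_st le_t2m le_im; lia.
  rewrite /set_bit (ltn_eqF lt_ip) pushed_in_window_set_bit // lt_ip p_out addn0.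
  exact: passed.
- move=> i le_im; rewrite /set_bit.
  case: (eqVneq i p) => [->|ip] ai k k_in; case: eqP => // /eqP kp ak0.
    by rewrite pushE // window_lt_push.
  by rewrite !pushE //; apply: above.
- move=> i le_im; rewrite /set_bit; case: (eqVneq i p) => [->|ip] ai.
    rewrite vp; apply: eq_in_count => k; rewrite mem_iota => k_in.
    have kp : k != p by rewrite neq_ltn; apply/orP; right; lia.
    by rewrite (negbTE kp) pushE // window_lt_push ?andbT //; lia.
  rewrite -(rank i) // pushE //; apply: eq_in_count => k; rewrite mem_iota.
  case: (eqVneq k p) => [-> p_in|kp _]; last by rewrite pushE.
  by rewrite ap0 /= ltNge le_eqVlt window_owner_lt_push ?orbT //; lia.
Qed.

Lemma step_inv (x : bstate R) : bj x <= m - 3 -> loop_inv x -> loop_inv (step x).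
Proof.
case: x => c a p /= le_pm inv.
rewrite /body /= sum_window_bits; last exact: bits_le1 inv.
case: ifP => [/andP[/eqP vp /eqP ap0]|/negbT not_push]; first exact: push_inv.
exact: skip_inv.
Qed.

Lemma step_pointer_le (x : bstate R) : bj x <= m - 3 -> bj (step x) <= m - 2.
Proof.
case: x => c a p /= le_pm; rewrite /body /=; case: ifP => _ /=; last lia.
by have := lidx'_le s_gt0 le_st le_t2m le_pm; lia.
Qed.

Definition loop_measure (x : bstate R) : nat :=
  (m - 2 - count (fun i => bbits x i != 0) (iota 0 (m - 2))) * m + (m - 2 - bj x).

Lemma step_measure_lt (x : bstate R) : bj x <= m - 3 -> loop_inv x ->
  loop_measure (step x) < loop_measure x.
Proof.
case: x => c a p /= le_pm inv; rewrite /loop_measure /body /= sum_window_bits;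
  last exact: bits_le1 inv.
case: ifP => [/andP[_ /eqP ap0]|_] /=; last lia.
have := lidx'_le s_gt0 le_st le_t2m le_pm.
rewrite (@eq_count _ _ (fun k => (k == p) || (a k != 0))); last first.
  by move=> k /=; case: (k == p).
have := count_size (fun k => (k == p) || (a k != 0)) (iota 0 (m - 2)).
rewrite size_iota count_predU1_uniq ?iota_uniq ?ap0 // mem_iota add0n.
rewrite (_ : p < m - 2); last by lia.
set C := count _ _ => le_Cm le_lp.
have : (m - 2 - (C + 1)).+1 <= m - 2 - C by lia.
rewrite -(leq_pmul2r (_ : 0 < m)); last by lia.
by rewrite mulSn; lia.
Qed.

Lemma loop_terminates B (x : bstate R) :
  loop_measure x < B -> bj x <= m - 3 -> loop_inv x -> exists f, LoopRun s t N m v x f.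
Proof.
elim: B x => // B IH x lt_B le_pm inv.
case: (eqVneq (bj (step x)) (m - 2)) => [stop|go].
  by exists (bcells (step x)); apply: LR_stop.
have [f run] : exists f, LoopRun s t N m v (step x) f.
  apply: IH; last exact: step_inv.
    by have := step_measure_lt le_pm inv; lia.
  by have := step_pointer_le le_pm; lia.
by exists f; apply: LR_cont => //; apply/eqP.
Qed.

Lemma loop_final_inv (x : bstate R) f :
  LoopRun s t N m v x f -> bj x <= m - 3 -> loop_inv x ->
  exists a, loop_inv (BState f a (m - 2)).
Proof.
elim=> [y stop|y g go _ IH] le_pm inv; have inv' := step_inv le_pm inv.
  by exists (bbits (step y)); move: inv' stop; case: (step y) => ? ? ? /= ? <-.
by apply: IH => //; have := step_pointer_le le_pm; lia.
Qed.

Section Output.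
Hypothesis s_dvd_m : s %| m.
Local Notation z := (s * ((t + 2 + s - 1) %/ s - 1)).
Hypothesis v_le : forall j, j < m -> v j <= t - 1 - j %% s.
Hypothesis v_tail : forall j, m - z <= j < m -> v j = 0.
Local Notation bend j := (s * (j %/ s) + t - 1).

Lemma v_le_window i : i <= m - 3 -> v i <= r' i - i.
Proof.
move=> le_im; rewrite /ridx' ridx_small //; case: ifP => [_|/negbT].
  have lt_im : i < m by lia.
  by have := v_le lt_im; have := divn_eq i s; rewrite mulnC; lia.
rewrite -ltnNge => /(tail_le_of_bend_gt s_gt0 le_st le_t2m s_dvd_m) tail_i.
by rewrite v_tail //; lia.
Qed.

Lemma all_pushed (c : nat -> R) a : loop_inv (BState c a (m - 2)) ->
  forall i, i <= m - 3 -> a i != 0.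
Proof.
case=> /= _ _ passed _ _.
have window_pushed i : i <= m - 3 -> (forall k, i < k <= r' i -> a k != 0) ->
    a i != 0.
  move=> le_im all_k; case: (passed i _) => [|//|lt_v]; first lia.
  have : pushed_in_window a i = r' i - i.
    rewrite /pushed_in_window (@eq_in_count _ _ predT) ?count_predT ?size_iota //.
    by move=> k; rewrite mem_iota => k_in; apply: all_k; lia.
  by have := v_le_window le_im; lia.
suff pushed : forall d i, m - 3 - i <= d -> i <= m - 3 -> a i != 0.
  by move=> i; apply: pushed.
elim=> [|d IH] i le_d le_im; apply: window_pushed => // k k_in;
  have := ridx'_le s t m i; [lia | move=> ?; apply: IH; lia].
Qed.

Lemma local_rank_final (c : nat -> R) a j :
  loop_inv (BState c a (m - 2)) -> j <= m - z - 1 ->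
  local_rank s t (push s t N (m - 2) c) j = v j.
Proof.
move=> inv le_j; have pushed := all_pushed inv.
have le_bend : bend j <= m - 3.
  rewrite leqNgt; apply/negP => /(tail_le_of_bend_gt s_gt0 le_st le_t2m s_dvd_m).
  by have := leq_divM (t + 1) s; rewrite mulnC -block_tail_eq //; lia.
have le_jm : j <= m - 3 by have := leq_block_end j s_gt0 le_st; lia.
have r'E : r' j = bend j by rewrite /ridx' ridx_small // le_bend.
rewrite /local_rank -(pushed_rank inv le_jm (pushed j le_jm)) /window r'E /=.
apply: eq_in_count => k; rewrite mem_iota => k_in.
by rewrite !push_ne ?pushed //; apply/eqP; lia.
Qed.

End Output.
End Loop.

Theorem theorem9 (R : realType) (s t m : nat) (v : nat -> nat)
  (c : nat -> R) :
  0 < s -> s <= t -> s %| m -> t + 2 <= m ->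
  let n := m ^ 2 in
  let z := s * ((t + 2 + s - 1) %/ s - 1) in
  (forall j, j < m -> v j <= t - 1 - j %% s) ->
  (forall j, m - z <= j < m -> v j = 0) ->
  (forall i k, i < n -> k < n -> i <> k -> c i <> c k) ->
  (exists c' : nat -> R, BlockRun s t n m v c c') /\
  (forall c' : nat -> R, BlockRun s t n m v c c' ->
     forall j, j <= m - z - 1 -> local_rank s t c' j = v j).
Proof.
move=> s_gt0 le_st s_dvd_m le_t2m n z v_le v_tail _.
set x0 := BState (push s t n (n - 1) c) (fun _ => 0) 0.
have inv0 : loop_inv s t m v x0 := loop_inv_init s t m v _.
split.
  have [f run] :=
    loop_terminates s_gt0 le_st le_t2m (x := x0) (ltnSn _) (leq0n _) inv0.
  by exists (push s t n (m - 2) f), f.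
move=> _ [f [run ->]] j le_j.
have [a inv] := loop_final_inv s_gt0 le_st le_t2m run (leq0n _) inv0.
exact: (local_rank_final s_gt0 le_st le_t2m s_dvd_m v_le v_tail inv le_j).
Qed.
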